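(* Let $\lambda,\mu$ be partitions with $\mathrm{core}(\lambda)=\mathrm{core}(\mu)$, and write $\mathrm{quot}(\lambda)=(\lambda^0,\dots,\lambda^{\ell-1})$, $\mathrm{quot}(\mu)=(\mu^0,\dots,\mu^{\ell-1})$. If $|\lambda^i|=|\mu^i|$ and $\lambda^i\ge\mu^i$ in dominance order for every $i$, then $\lambda\ge\mu$ in dominance order.
   Context: Fix $\ell\ge1$. Nodes of a partition $\lambda$ are $(a,b)$ with $1\le a\le\lambda_b$; content $b-a$. Let $n_j(\lambda)$ be the number of nodes of content $j$. Maya diagram $m(\lambda):\mathbb{Z}\to\{\pm1\}$: for $j\ge0$, $m(\lambda)(j)=-1$ if $n_{j+1}-n_j=-1$, else $1$; for $j<0$, $m(\lambda)(j)=1$ if $n_{j+1}-n_j=1$, else $-1$. Charge of $m$: $\#\{j<0:m(j)=-1\}-\#\{j\ge0:m(j)=1\}$; charge-zero Maya diagrams correspond bijectively to partitions. For $0\le i\le\ell-1$, $m_i(j)=m(\lambda)(i+j\ell)$ has charge $c_i$, and its unique charge-zero translate is the Maya diagram of a partition $\lambda^i$. $\mathrm{quot}(\lambda)=(\lambda^0,\dots,\lambda^{\ell-1})$ (the $\ell$-quotient) and $\mathrm{core}(\lambda)=(c_0,\dots,c_{\ell-1})$ (encoding the $\ell$-core). *)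

From mathcomp Require Import all_boot all_order all_algebra.
Set Implicit Arguments. Unset Strict Implicit. Unset Printing Implicit Defensive.
Import Order.TTheory GRing.Theory Num.Theory.
Local Open Scope ring_scope.

(* A partition: a weakly decreasing sequence of positive naturals
   (lambda_1 >= lambda_2 >= ... > 0); lambda_b = nth 0 lam b.-1. *)
Definition is_partition (lam : seq nat) : bool :=
  sorted geq lam && all (fun x => (0 < x)%N) lam.

(* n_j(lambda): number of nodes (a,b), 1 <= a <= lambda_b, of content b - a = j. *)
Definition ncont (lam : seq nat) (j : int) : nat :=
  count (fun b : nat => (0 < b%:Z - j) && (b%:Z - j <= (nth 0%N lam b.-1)%:Z))
        (iota 1 (size lam)).

Definition maya (lam : seq nat) (j : int) : int :=
  let d := (ncont lam (j + 1))%:Z - (ncont lam j)%:Z in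
  if 0 <= j then (if d == -1 then -1 else 1)
  else (if d == 1 then 1 else -1).

(* Charge of a Maya diagram m which equals 1 on [N, oo) and -1 on (-oo, -N):
   #{j<0 : m j = 1} - #{j>=0 : m j = -1}, both counts taken in the window [-N, N). *)
Definition charge_win (N : nat) (m : int -> int) : int :=
  (count (fun k : nat => m (- (k.+1)%:Z) == 1) (iota 0 N))%:Z
  - (count (fun k : nat => m k%:Z == -1) (iota 0 N))%:Z.

Definition maya_comp (l : nat) (lam : seq nat) (i : nat) (j : int) : int :=
  maya lam (i%:Z + j * l%:Z).

(* c_i = charge of m_i. The window N = size lam + sumn lam + l is large enough:
   m_i(j) = 1 for j >= size lam and m_i(j) = -1 for j < -(lambda_1 + i). *)
Definition core_comp (l : nat) (lam : seq nat) (i : nat) : int :=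
  charge_win (size lam + sumn lam + l) (maya_comp l lam i).

Definition core (l : nat) (lam : seq nat) : seq int :=
  [seq core_comp l lam i | i <- iota 0 l].

(* nu is the i-th component lambda^i of the l-quotient: nu is the partition whose
   Maya diagram is the (charge-zero) translate of m_i. *)
Definition is_quot_comp (l : nat) (lam : seq nat) (i : nat) (nu : seq nat) : Prop :=
  is_partition nu /\
  exists k : int, forall j : int, maya nu j = maya_comp l lam i (j + k).

Definition dominates (lam mu : seq nat) : Prop :=
  forall k : nat, (sumn (take k mu) <= sumn (take k lam))%N.

From mathcomp Require Import all_boot all_order all_algebra.
From mathcomp Require Import zify ring lra.
Set Implicit Arguments. Unset Strict Implicit. Unset Printing Implicit Defensive.
Import Order.TTheory GRing.Theory Num.Theory.
Local Open Scope ring_scope.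

(* For a partition s with (0-indexed) parts s_b, the beta numbers
   b - s_b are strictly increasing in b, and they describe the Maya diagram:
   [m(s)(k) = 1] - [0 <= k] = sum_b ([k = b - s_b] - [k = b]).
   1. Dominance is a family of linear inequalities: for partitions lam, mu,
      lam >= mu  <->  for all e, sum_b (e - (b - mu_b))_+ <= sum_b (e - (b - lam_b))_+.
   2. By the beta-number description, sum_b (e - (b - s_b))_+ equals, up to a
      term independent of s, the Maya weight sum_k (e - k)_+ [m(s)(k) = 1].
   3. Splitting k = i + j*l along the l runners, (e - i - j*l)_+ is a
      nonnegative combination of (q - j)_+ and (q + 1 - j)_+, so the Maya
      weight is a nonnegative combination of the runner weights
      sum_j (x - j)_+ [m_i(j) = 1].
   4. Runner i is the Maya diagram of the quotient s^i shifted by its charge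
      c_i, so its weight is the tail of s^i (step 2) plus a term depending only
      on c_i.  Equal cores and step 1 for lam^i >= mu^i compare the runner
      weights; steps 3, 2 and 1 then give lam >= mu. *)

Definition ind (b : bool) : int := if b then 1 else 0.
Definition ppart (x : int) : int := if 0 <= x then x else 0.

Lemma ppart_ge0 x : 0 <= ppart x.
Proof. by rewrite /ppart; case: ifP; lia. Qed.

Lemma le_ppart x : x <= ppart x.
Proof. by rewrite /ppart; case: ifP; lia. Qed.

Definition zsum (a : int) (n : nat) (F : int -> int) : int :=
  \sum_(0 <= t < n) F (a + t%:Z).

Lemma zsum0 a F : zsum a 0 F = 0.
Proof. by rewrite /zsum big_geq. Qed.

Lemma zsumS a n F : zsum a n.+1 F = zsum a n F + F (a + n%:Z).
Proof. by rewrite /zsum big_nat_recr. Qed.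

Lemma zsum_cat a n1 n2 F :
  zsum a (n1 + n2) F = zsum a n1 F + zsum (a + n1%:Z) n2 F.
Proof.
rewrite /zsum (@big_cat_nat _ _ _ n1) ?leq_addr //=; congr (_ + _).
rewrite -{1}[n1]add0n big_addn addKn.
by apply: eq_bigr => t _; congr F; rewrite PoszD; ring.
Qed.

Lemma eq_zsum a n F G : (forall k, a <= k < a + n%:Z -> F k = G k) ->
  zsum a n F = zsum a n G.
Proof. by move=> H; apply: eq_big_nat => t /andP[_ Ht]; apply: H; lia. Qed.

Lemma zsum_eq0 a n F : (forall k, a <= k < a + n%:Z -> F k = 0) -> zsum a n F = 0.
Proof. by move=> H; rewrite (eq_zsum H) /zsum big1. Qed.

Lemma zsumD a n F G : zsum a n (fun k => F k + G k) = zsum a n F + zsum a n G.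
Proof. exact: big_split. Qed.

Lemma zsumB a n F G : zsum a n (fun k => F k - G k) = zsum a n F - zsum a n G.
Proof. exact: sumrB. Qed.

Lemma zsumMl a n c F : zsum a n (fun k => c * F k) = c * zsum a n F.
Proof. by rewrite /zsum mulr_sumr. Qed.

Lemma zsum_shift a n k F : zsum a n (fun j => F (j - k)) = zsum (a - k) n F.
Proof. by apply: eq_bigr => t _; congr F; ring. Qed.

Lemma zsum_widen a n a' n' F :
  (forall k, (k < a) || (a + n%:Z <= k) -> F k = 0) ->
  a' <= a -> a + n%:Z <= a' + n'%:Z -> zsum a' n' F = zsum a n F.
Proof.
move=> F0 ha hn.
have -> : n' = (`|a - a'| + n + (n' - `|a - a'| - n))%N by lia.
rewrite !zsum_cat.
have -> : a' + `|a - a'|%:Z = a by lia.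
have -> : a' + (`|a - a'| + n)%N%:Z = a + n%:Z by lia.
rewrite (@zsum_eq0 a') ?add0r; last by move=> k hk; apply: F0; lia.
by rewrite (@zsum_eq0 (a + n%:Z)) ?addr0 // => k hk; apply: F0; lia.
Qed.

Lemma zsum_delta a n c g : a <= c < a + n%:Z ->
  zsum a n (fun k => g k * ind (k == c)) = g c.
Proof.
move=> hc; rewrite (@zsum_widen c 1); try lia.
  by rewrite /zsum big_nat1 /ind addr0 eqxx mulr1.
by move=> k hk; rewrite /ind; case: eqP => [e|]; [lia | rewrite mulr0].
Qed.

Lemma zsum_ind_ge a n c : a <= c ->
  zsum a n (fun j => ind (c <= j)) = ppart (a + n%:Z - c).
Proof.
move=> hc; elim: n => [|n IH]; first by rewrite zsum0 /ppart; case: ifP; lia.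
by rewrite zsumS IH /ppart /ind; do 3 case: ifP; lia.
Qed.

Lemma zsum_runners (l : nat) a n F :
  zsum (a * l%:Z) (n * l) F =
  \sum_(0 <= i < l) zsum a n (fun j => F (i%:Z + j * l%:Z)).
Proof.
elim: n => [|n IH]; first by rewrite mul0n zsum0 big1 // => i _; rewrite zsum0.
rewrite mulSn addnC zsum_cat IH.
under [RHS]eq_bigr => i _ do rewrite zsumS.
rewrite big_split /=; congr (_ + _).
by apply: eq_bigr => i _; congr F; rewrite PoszM; ring.
Qed.

Lemma count_ind (T : Type) (p : pred T) s : (count p s)%:Z = \sum_(x <- s) ind (p x).
Proof.
elim: s => [|x s IH]; first by rewrite big_nil.
by rewrite /= big_cons PoszD IH /ind; case: (p x).
Qed.

Lemma count_le1 (T : eqType) (p : pred T) s : uniq s ->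
  {in s &, forall x y, p x -> p y -> x = y} -> (count p s <= 1)%N.
Proof.
elim: s => [|x s IH] //= /andP[xNs s_uniq] p_inj.
case px: (p x) => /=.
  rewrite add1n ltnS leqn0 eqn0Ngt -has_count; apply/hasP => -[y ys py].
  have := p_inj x y; rewrite !inE eqxx ys orbT => /(_ isT isT px py) exy.
  by move: xNs; rewrite exy ys.
by apply: IH => // a b ha hb; apply: p_inj; rewrite inE ?ha ?hb orbT.
Qed.

Lemma sum_ind_eq_nat k n :
  \sum_(0 <= b < n) ind (k == b%:Z) = ind ((0 <= k) && (k < n%:Z)).
Proof.
elim: n => [|n IH]; first by rewrite big_geq // /ind; case: ifP; lia.
by rewrite big_nat_recr //= IH /ind; do 3 case: ifP; lia.
Qed.

Lemma nth_le_sumn (s : seq nat) b : (nth 0%N s b <= sumn s)%N.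
Proof.
elim: s b => [|x s IH] [|b] //=; first exact: leq_addr.
exact: leq_trans (IH b) (leq_addl _ _).
Qed.

Lemma sumn_take (s : seq nat) k :
  (sumn (take k s))%:Z = \sum_(0 <= b < k) (nth 0%N s b)%:Z.
Proof.
elim: s k => [|x s IH] k; first by rewrite /= big1 // => b _; rewrite nth_nil.
case: k => [|k]; first by rewrite big_geq.
by rewrite /= big_nat_recl //= PoszD IH.
Qed.

Section PartitionFacts.

Variable lam : seq nat.
Hypothesis lam_part : is_partition lam.

Lemma partition_nth_gt0 b : (b < size lam)%N -> (0 < nth 0%N lam b)%N.
Proof. by case/andP: lam_part => _ /allP pos bs; apply/pos/mem_nth. Qed.

Lemma partition_nth_mono b1 b2 : (b1 <= b2)%N ->
  (nth 0%N lam b2 <= nth 0%N lam b1)%N.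
Proof.
case/andP: lam_part => sorted_lam _ hb.
case: (ltnP b2 (size lam)) => h2; last by rewrite nth_default.
apply: (sorted_leq_nth _ _ _ sorted_lam) => //; rewrite ?inE ?(leq_ltn_trans hb) //.
- by move=> y x z /= h1 h2'; apply: leq_trans h2' h1.
- exact: leqnn.
Qed.

(* Beta numbers b - lam_b are strictly increasing, so a given k is one of them
   at most once, and never when k >= size lam. *)
Lemma beta_hits k :
  let c := \sum_(0 <= b < size lam) ind (k == b%:Z - (nth 0%N lam b)%:Z) in
  (c = 0 \/ c = 1) /\ ((size lam)%:Z <= k -> c = 0).
Proof.
pose P b := k == b%:Z - (nth 0%N lam b)%:Z.
have -> : \sum_(0 <= b < size lam) ind (P b) = (count P (iota 0 (size lam)))%:Z.
  by rewrite count_ind /index_iota subn0.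
have : (count P (iota 0 (size lam)) <= 1)%N.
  apply: count_le1 (iota_uniq _ _) _ => x y _ _ /eqP ex /eqP ey.
  case: (leqP x y) => hxy.
    by have := partition_nth_mono hxy; lia.
  by have := partition_nth_mono (ltnW hxy); lia.
move=> le1; split; first lia.
move=> hk; apply/eqP; rewrite eqz_nat -leqn0 leqNgt -has_count.
apply/hasP => -[b]; rewrite mem_iota add0n => /andP[_ hb] /eqP e.
by have := partition_nth_gt0 hb; lia.
Qed.

End PartitionFacts.

(* n_{k+1} - n_k: row b contributes +1 at content b - lam_b, -1 at content b. *)
Lemma ncont_step lam k : (ncont lam (k + 1))%:Z - (ncont lam k)%:Z =
  \sum_(0 <= b < size lam) (ind (k == b%:Z - (nth 0%N lam b)%:Z) - ind (k == b%:Z)).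
Proof.
rewrite /ncont !count_ind -sumrB -[1%N]addn0 iotaDl big_map /index_iota subn0.
by apply: eq_bigr => b _; rewrite add1n /= /ind; do 4 case: ifP; lia.
Qed.

Section MayaBeta.

Variable lam : seq nat.
Hypothesis lam_part : is_partition lam.

Lemma maya_beta k :
  ind (maya lam k == 1) - ind (0 <= k) =
  \sum_(0 <= b < size lam) (ind (k == b%:Z - (nth 0%N lam b)%:Z) - ind (k == b%:Z)).
Proof.
have [hits01 hits_big] := beta_hits lam_part k.
rewrite /maya /= ncont_step sumrB sum_ind_eq_nat.
move: hits01 hits_big.
set c := \sum_(0 <= b < size lam) _; clearbody c => hits01 hits_big.
rewrite /ind; case: hits01 hits_big => -> hits_big.
  by case: (0 <= k); case: (k < (size lam)%:Z) => /=; lia.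
by case h0: (0 <= k); case h1: (k < (size lam)%:Z) => /=; lia.
Qed.

Lemma maya_weighted_sum a n (g : int -> int) :
  a <= - (sumn lam)%:Z -> (size lam)%:Z <= a + n%:Z ->
  zsum a n (fun k => g k * (ind (maya lam k == 1) - ind (0 <= k))) =
  \sum_(0 <= b < size lam) (g (b%:Z - (nth 0%N lam b)%:Z) - g b%:Z).
Proof.
move=> ha hn.
transitivity (\sum_(0 <= b < size lam) zsum a n
   (fun k => g k * ind (k == b%:Z - (nth 0%N lam b)%:Z) - g k * ind (k == b%:Z))).
  rewrite /zsum exchange_big /=; apply: eq_bigr => t _.
  by rewrite maya_beta mulr_sumr; apply: eq_bigr => b _; rewrite mulrBr.
apply: eq_big_nat => b /andP[_ hb]; have row_le := nth_le_sumn lam b.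
by rewrite zsumB !zsum_delta //; lia.
Qed.

Lemma maya_outside j :
  (j < - (sumn lam)%:Z) || ((size lam)%:Z <= j) -> ind (maya lam j == 1) = ind (0 <= j).
Proof.
move=> hj; apply/eqP; rewrite -subr_eq0 maya_beta.
apply/eqP/big1_seq => b; rewrite mem_iota add0n => /andP[_ hb].
by have := nth_le_sumn lam b; rewrite /ind; do 2 case: ifP; lia.
Qed.

End MayaBeta.

Lemma maya_pm1 lam j : maya lam j = 1 \/ maya lam j = -1.
Proof. by rewrite /maya /=; case: (0 <= j); [case: (_ == -1) | case: (_ == 1)]; auto. Qed.

(* The "tail" of a partition: beta_tail M s e = sum_{b < M} (e - (b - s_b))_+.
   Tails determine dominance (dominates_beta_tail, beta_tail_dominates) and are
   Maya-diagram weights (beta_tail_maya). *)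
Definition beta_tail (M : nat) (s : seq nat) (e : int) : int :=
  \sum_(0 <= b < M) ppart (e - (b%:Z - (nth 0%N s b)%:Z)).

Lemma beta_tail_sub_nil (s : seq nat) M e : (size s <= M)%N ->
  beta_tail M s e - beta_tail M [::] e =
  \sum_(0 <= b < size s) (ppart (e - (b%:Z - (nth 0%N s b)%:Z)) - ppart (e - b%:Z)).
Proof.
move=> hM; rewrite /beta_tail -sumrB (@big_cat_nat _ _ _ (size s)) //=.
rewrite [\sum_(size s <= i < M) _]big1_seq ?addr0.
  by apply: eq_bigr => b _; rewrite nth_nil subr0.
move=> b /andP[_]; rewrite mem_index_iota => /andP[hb _].
by rewrite nth_default ?nth_nil ?subrr.
Qed.

Lemma sum_beta_prefix (s : seq nat) e k :
  \sum_(0 <= b < k) (e - (b%:Z - (nth 0%N s b)%:Z)) =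
  \sum_(0 <= b < k) (e - b%:Z) + (sumn (take k s))%:Z.
Proof. by rewrite sumn_take -big_split; apply: eq_bigr => b _ /=; ring. Qed.

Lemma sum_ppart_prefix (y : nat -> int) M :
  (forall b1 b2, (b1 <= b2)%N -> y b2 <= y b1) ->
  exists k, [/\ (k <= M)%N, \sum_(0 <= b < M) ppart (y b) = \sum_(0 <= b < k) y b
             & ((k < M)%N -> y k <= 0)].
Proof.
move=> y_mono; elim: M => [|M [k [hk sum_k yk_le0]]].
  by exists 0%N; split=> //; rewrite !big_geq.
have ppart_nonpos x : x <= 0 -> ppart x = 0 by rewrite /ppart; case: ifP; lia.
rewrite big_nat_recr //=.
case: (ltnP k M) => hkM.
  have yM_le0 : y M <= 0 by apply: le_trans (y_mono _ _ (ltnW hkM)) (yk_le0 hkM).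
  exists k; split; [exact: leqW | by rewrite sum_k ppart_nonpos ?addr0 | ].
  by move=> _; apply: yk_le0.
have ekM : k = M by apply/eqP; rewrite eqn_leq hk hkM.
subst k.
case: (lerP (y M) 0) => yM.
  by exists M; split; [exact: leqnSn | rewrite sum_k ppart_nonpos ?addr0 |].
exists M.+1; split; rewrite ?ltnn //.
by rewrite big_nat_recr //= sum_k /ppart ifT // ltW.
Qed.

Lemma sum_ppart_widen (F : nat -> int) k M : (k <= M)%N ->
  \sum_(0 <= b < k) ppart (F b) <= \sum_(0 <= b < M) ppart (F b).
Proof.
move=> hk; rewrite [X in _ <= X](@big_cat_nat _ _ _ k) //= lerDl.
by apply: sumr_ge0 => b _; apply: ppart_ge0.
Qed.

Lemma sum_le_ppart (F : nat -> int) k :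
  \sum_(0 <= b < k) F b <= \sum_(0 <= b < k) ppart (F b).
Proof. by apply: ler_sum => b _; apply: le_ppart. Qed.

Lemma dominates_beta_tail lam mu M e : is_partition mu -> dominates lam mu ->
  beta_tail M mu e <= beta_tail M lam e.
Proof.
move=> mu_part lam_dom.
have [k [hk tail_mu _]] := @sum_ppart_prefix
  (fun b => e - (b%:Z - (nth 0%N mu b)%:Z)) M
  (fun b1 b2 h => ltac:(have := partition_nth_mono mu_part h; lia)).
rewrite /beta_tail tail_mu.
apply: le_trans (sum_ppart_widen (fun b => e - (b%:Z - (nth 0%N lam b)%:Z)) hk).
apply: le_trans (sum_le_ppart _ _).
by rewrite !sum_beta_prefix lerD2l lez_nat; apply: lam_dom.
Qed.

(* Conversely, the tail at e = k - lam_k is the plain sum over the first k+1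
   rows; comparing these tails recovers every dominance inequality. *)
Lemma beta_tail_dominates lam mu M : is_partition lam ->
  (size lam <= M)%N -> (size mu <= M)%N ->
  (forall e, beta_tail M mu e <= beta_tail M lam e) -> dominates lam mu.
Proof.
move=> lam_part hlM hmM tail_le.
suff prefix_le k : (k <= M)%N -> (sumn (take k mu) <= sumn (take k lam))%N.
  move=> k; case: (leqP k M) => hk; first exact: prefix_le.
  by have := prefix_le M (leqnn M); rewrite !take_oversize // (leq_trans _ (ltnW hk)).
case: k => [|k] hk; first by rewrite !take0.
pose e := k%:Z - (nth 0%N lam k)%:Z.
have tail_lam : beta_tail M lam e = \sum_(0 <= b < k.+1) (e - (b%:Z - (nth 0%N lam b)%:Z)).
  rewrite /beta_tail (@big_cat_nat _ _ _ k.+1) //= [X in _ + X]big1_seq ?addr0.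
    apply: eq_big_nat => b /andP[_ hb]; have := @partition_nth_mono lam lam_part b k hb.
    by rewrite /ppart /e; case: ifP; lia.
  move=> b /andP[_]; rewrite mem_index_iota => /andP[hb _].
  have := @partition_nth_mono lam lam_part k b (ltnW hb).
  by rewrite /ppart /e; case: ifP; lia.
have := le_trans (sum_le_ppart (fun b => e - (b%:Z - (nth 0%N mu b)%:Z)) k.+1)
  (le_trans (sum_ppart_widen _ hk) (tail_le e)).
by rewrite tail_lam !sum_beta_prefix lerD2l lez_nat.
Qed.

Definition maya_weight (a : int) (n : nat) (s : seq nat) (e : int) : int :=
  zsum a n (fun k => ppart (e - k) * ind (maya s k == 1)).

Lemma beta_tail_maya s M a n e : is_partition s -> (size s <= M)%N ->
  a <= - (sumn s)%:Z -> (size s)%:Z <= a + n%:Z ->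
  beta_tail M s e - beta_tail M [::] e =
  maya_weight a n s e - zsum a n (fun k => ppart (e - k) * ind (0 <= k)).
Proof.
move=> s_part hM ha hn.
rewrite beta_tail_sub_nil // -(maya_weighted_sum s_part (fun k => ppart (e - k)) ha hn).
by rewrite /maya_weight -zsumB; apply: eq_zsum => k _; ring.
Qed.

Definition runner_weight (l : nat) (s : seq nat) (i W : nat) (x : int) : int :=
  zsum (- W%:Z) (2 * W) (fun j => ppart (x - j) * ind (maya_comp l s i j == 1)).

Lemma runner_weight_quot l s i nu k M (W : nat) x : is_partition nu ->
  (forall j, maya nu j = maya_comp l s i (j + k)) ->
  (size nu <= M)%N -> ((sumn nu + size nu + `|k|)%N <= W)%N ->
  runner_weight l s i W x =
    (beta_tail M nu (x - k) - beta_tail M [::] (x - k)) +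
    zsum (- W%:Z) (2 * W) (fun j => ppart (x - j) * ind (k <= j)).
Proof.
move=> nu_part nu_runner hM hW.
pose F j' := ppart (x - k - j') * (ind (maya nu j' == 1) - ind (0 <= j')).
pose G j := ppart (x - j) * ind (k <= j).
transitivity (zsum (- W%:Z) (2 * W) (fun j => F (j - k) + G j)).
  apply: eq_zsum => j _; rewrite /F /G nu_runner subrK subr_ge0.
  have -> : x - k - (j - k) = x - j by ring.
  ring.
rewrite (zsumD _ _ (fun j => F (j - k)) G) (zsum_shift _ _ k F); congr (_ + _).
rewrite /F maya_weighted_sum //; try lia.
by rewrite beta_tail_sub_nil //; apply: eq_bigr => b _; congr (ppart _ - ppart _); ring.
Qed.

Lemma charge_win_zsum (m : int -> int) N : (forall j, m j = 1 \/ m j = -1) ->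
  charge_win N m = zsum (- N%:Z) (2 * N) (fun j => ind (m j == 1) - ind (0 <= j)).
Proof.
move=> m_pm1; have -> : (2 * N = N + N)%N by lia.
rewrite zsum_cat addNr /charge_win !count_ind; congr (_ + _).
  rewrite /zsum big_nat_rev /index_iota subn0.
  apply: eq_big_seq => t; rewrite mem_iota add0n => /andP[_ ht].
  have -> : - N%:Z + (N - t.+1)%N%:Z = - t.+1%:Z by lia.
  by rewrite /ind; case: ifP => //; lia.
rewrite /zsum /index_iota subn0 -sumrN; apply: eq_bigr => t _.
by rewrite add0r /ind (_ : (0 <= t%:Z) = true) //; case: (m_pm1 t) => -> /=.
Qed.

Lemma maya_comp_outside l lam i j : (0 < l)%N -> (i < l)%N -> is_partition lam ->
  let N := (size lam + sumn lam + l)%N in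
  (j < - N%:Z) || (- N%:Z + (2 * N)%N%:Z <= j) ->
  ind (maya_comp l lam i j == 1) - ind (0 <= j) = 0.
Proof.
move=> hl hi lam_part N hj; rewrite /maya_comp.
have far : (i%:Z + j * l%:Z < - (sumn lam)%:Z) || ((size lam)%:Z <= i%:Z + j * l%:Z).
  case/orP: hj => hj; rewrite /N in hj; apply/orP; [left | right; nia].
  have : (j + 1) * l%:Z <= j + 1 by nia.
  nia.
rewrite maya_outside //.
by case/orP: hj => hj; rewrite /ind; do 2 case: ifP; try lia; rewrite /N in hj; nia.
Qed.

Lemma core_comp_shift l lam i nu k : (0 < l)%N -> (i < l)%N ->
  is_partition lam -> is_partition nu ->
  (forall j, maya nu j = maya_comp l lam i (j + k)) -> core_comp l lam i = - k.
Proof.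
move=> hl hi lam_part nu_part nu_runner.
rewrite /core_comp charge_win_zsum; last by move=> j; apply: maya_pm1.
set N := (size lam + sumn lam + l)%N.
pose W := (N + sumn nu + size nu + `|k|)%N.
have runner_trivial j : (j < - N%:Z) || (- N%:Z + (2 * N)%N%:Z <= j) ->
    ind (maya_comp l lam i j == 1) - ind (0 <= j) = 0 by exact: maya_comp_outside.
rewrite -(@zsum_widen _ _ (- W%:Z) (2 * W) _ runner_trivial); try lia.
pose F j' := ind (maya nu j' == 1) - ind (0 <= j').
have nu_charge0 : zsum (- W%:Z - k) (2 * W) F = 0.
  have := @maya_weighted_sum nu nu_part (- W%:Z - k) (2 * W) (fun _ => 1)
    ltac:(lia) ltac:(lia).
  rewrite big1 => [<-|b _]; last by rewrite subrr.
  by apply: eq_zsum => j _; rewrite mul1r.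
transitivity (zsum (- W%:Z) (2 * W) (fun j => F (j - k) + (ind (k <= j) - ind (0 <= j)))).
  by apply: eq_zsum => j _; rewrite /F nu_runner subrK subr_ge0; ring.
rewrite zsumD (zsum_shift _ _ k F) nu_charge0 add0r zsumB !zsum_ind_ge; try lia.
by rewrite /ppart; do 2 case: ifP; lia.
Qed.

Lemma eventually_all (P : nat -> nat -> Prop) l :
  (forall i, (i < l)%N -> exists W0, forall W, (W0 <= W)%N -> P i W) ->
  exists W0, forall W, (W0 <= W)%N -> forall i, (i < l)%N -> P i W.
Proof.
elim: l => [|l IH] ev_P; first by exists 0%N.
have [W1 HW1] := IH (fun i hi => ev_P i (ltnW hi)).
have [W2 HW2] := ev_P l (ltnSn l).
exists (W1 + W2)%N => W hW i; rewrite ltnS leq_eqVlt => /orP[/eqP ->|hi].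
  by apply: HW2; apply: leq_trans hW; apply: leq_addl.
by apply: HW1 => //; apply: leq_trans hW; apply: leq_addr.
Qed.

Lemma core_nth l lam i : (i < l)%N -> nth 0 (core l lam) i = core_comp l lam i.
Proof. by move=> hi; rewrite /core (nth_map 0%N) ?size_iota // nth_iota. Qed.

Lemma runner_weight_le l lam mu lq mq i : (0 < l)%N -> (i < l)%N ->
  is_partition lam -> is_partition mu ->
  is_quot_comp l lam i lq -> is_quot_comp l mu i mq ->
  core_comp l lam i = core_comp l mu i -> dominates lq mq ->
  exists W0, forall W, (W0 <= W)%N ->
    forall x, runner_weight l mu i W x <= runner_weight l lam i W x.
Proof.
move=> hl hi lam_part mu_part [lq_part [k lq_runner]] [mq_part [k' mq_runner]] core_eq dom.
have {}mq_runner : forall j, maya mq j = maya_comp l mu i (j + k).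
  have := core_comp_shift hl hi mu_part mq_part mq_runner.
  by rewrite -core_eq (core_comp_shift hl hi lam_part lq_part lq_runner) => /oppr_inj ->.
exists (sumn lq + size lq + sumn mq + size mq + `|k|)%N => W hW x.
rewrite (runner_weight_quot (M := size lq + size mq) x lq_part lq_runner); try lia.
rewrite (runner_weight_quot (M := size lq + size mq) x mq_part mq_runner); try lia.
by rewrite !lerD2r; apply: dominates_beta_tail.
Qed.

Lemma ppart_runner_split (l : nat) (e i q r j : int) :
  e - i = q * l%:Z + r -> 0 <= r -> r < l%:Z ->
  ppart (e - (i + j * l%:Z)) = (l%:Z - r) * ppart (q - j) + r * ppart (q + 1 - j).
Proof.
move=> he hr0 hrl; rewrite /ppart.
case: (lerP j q) => hjq.
  by rewrite ifT ?ifT ?ifT; try nia.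
rewrite ifF; last by nia.
rewrite ifF; last by lia.
case: ifP => h; last by rewrite !mulr0 addr0.
have -> : q + 1 - j = 0 by lia.
by rewrite !mulr0 addr0.
Qed.

(* Hence the Maya weight of s is a nonnegative combination of runner weights,
   so it is monotone under runner-wise comparison. *)
Lemma maya_weight_le l lam mu (W : nat) e : (0 < l)%N ->
  (forall i x, (i < l)%N -> runner_weight l mu i W x <= runner_weight l lam i W x) ->
  maya_weight (- W%:Z * l%:Z) (2 * W * l) mu e <=
  maya_weight (- W%:Z * l%:Z) (2 * W * l) lam e.
Proof.
move=> hl runner_le; rewrite /maya_weight !zsum_runners.
apply: ler_sum_nat => i /andP[_ hi].
have := divz_eq (e - i%:Z) l%:Z.
have : 0 <= ((e - i%:Z) %% l%:Z)%Z by apply: modz_ge0; lia.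
have : ((e - i%:Z) %% l%:Z)%Z < l%:Z by apply: ltz_pmod; lia.
set q := ((e - i%:Z) %/ l%:Z)%Z; set r := ((e - i%:Z) %% l%:Z)%Z => hrl hr0 hqr.
have split_runner s : zsum (- W%:Z) (2 * W)
    (fun j => ppart (e - (i%:Z + j * l%:Z)) * ind (maya s (i%:Z + j * l%:Z) == 1)) =
    (l%:Z - r) * runner_weight l s i W q + r * runner_weight l s i W (q + 1).
  rewrite /runner_weight /maya_comp -!zsumMl -zsumD; apply: eq_zsum => j _.
  by rewrite (ppart_runner_split j hqr hr0 hrl); ring.
rewrite !split_runner; apply: lerD; apply: ler_wpM2l; try lia; exact: runner_le.
Qed.

Unset Implicit Arguments.

Theorem mainTheorem5 (l : nat) (hl : (0 < l)%N) (lam mu : seq nat)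
  (lq mq : nat -> seq nat) :
  is_partition lam -> is_partition mu ->
  (forall i, (i < l)%N -> is_quot_comp l lam i (lq i)) ->
  (forall i, (i < l)%N -> is_quot_comp l mu i (mq i)) ->
  core l lam = core l mu ->
  (forall i, (i < l)%N -> sumn (lq i) = sumn (mq i) /\ dominates (lq i) (mq i)) ->
  dominates lam mu.
Proof.
move=> lam_part mu_part lam_quot mu_quot core_eq quot_dom.
have core_comp_eq i : (i < l)%N -> core_comp l lam i = core_comp l mu i.
  by move=> hi; rewrite -!core_nth // core_eq.
have [W0 runners_le] := @eventually_all
  (fun i W => forall x, runner_weight l mu i W x <= runner_weight l lam i W x) l
  (fun i hi => runner_weight_le hl hi lam_part mu_part (lam_quot i hi) (mu_quot i hi)
     (core_comp_eq i hi) (quot_dom i hi).2).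
apply: (@beta_tail_dominates lam mu (size lam + size mu)) => //;
  [exact: leq_addr | exact: leq_addl | move=> e].
pose W := (W0 + sumn lam + size lam + sumn mu + size mu)%N.
have window s : (sumn s + size s <= W)%N ->
    - W%:Z * l%:Z <= - (sumn s)%:Z /\ (size s)%:Z <= - W%:Z * l%:Z + (2 * W * l)%N%:Z.
  by move=> hs; split; nia.
have [ha_lam hn_lam] := window lam ltac:(rewrite /W; lia).
have [ha_mu hn_mu] := window mu ltac:(rewrite /W; lia).
have tail_lam := beta_tail_maya e lam_part (leq_addr (size mu) (size lam)) ha_lam hn_lam.
have tail_mu := beta_tail_maya e mu_part (leq_addl (size lam) (size mu)) ha_mu hn_mu.
have := maya_weight_le e hl (fun i x hi => runners_le W ltac:(rewrite /W; lia) i hi x).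
lra.
Qed.
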